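(* Let $A=\Gamma_R(Rx)$ be the free $DP$ algebra on one generator $x$, so that $A$ is the free $R$-module on $\{\gamma_n(x):n\ge1\}$. Write $\gamma_n=\gamma_n(x)$, $\gamma_0=1\in A_+$, and $\phi_n=\phi_n(dx)\in\Omega^{CA}_{A/R}$, where $\Omega^{CA}_{A/R}$ carries the $U(A)$-module structure for which $d$ is a $DP$ derivation. Then for every $n\ge1$: $$d\gamma_n=\sum_{i=0}^{n-1}\gamma_i\,\phi_{n-i}\qquad\text{and}\qquad \phi_n=\sum_{i=0}^{n-1}(-1)^i\gamma_i\,d\gamma_{n-i},$$ and as an $A_+$-module $$\Omega^{CA}_{A/R}\cong A_+\cdot dx\ \oplus\ \bigoplus_{p\ \text{prime}}\ \bigoplus_{e\ge1}(A_+/pA_+)\cdot\phi_{p^e},$$ where $A_+\cdot dx$ is free on $dx=d\gamma_1$ and each summand $(A_+/pA_+)\cdot\phi_{p^e}$ is cyclic generated by $\phi_{p^e}$ and isomorphic to $A_+/pA_+$.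
   Context: Fix a commutative unital ring $R$. An ''algebra'' means a commutative, not necessarily unital, $R$-algebra. A $DP$ algebra is an algebra $A$ with maps $\gamma_n:A\to A$ ($n\ge1$) such that for all $a,b\in A$, $r\in R$, $m,n\ge1$: $\gamma_1(a)=a$; $\gamma_n(a+b)=\gamma_n(a)+\sum_{i+j=n,\,i,j\ge1}\gamma_i(a)\gamma_j(b)+\gamma_n(b)$; $\gamma_n(ab)=a^n\gamma_n(b)$; $\gamma_n(rb)=r^n\gamma_n(b)$; $\gamma_m(a)\gamma_n(a)=\frac{(m+n)!}{m!\,n!}\gamma_{m+n}(a)$; $\gamma_m(\gamma_n(a))=\frac{(mn)!}{m!(n!)^m}\gamma_{mn}(a)$. $\Gamma_R(Rx)$ is the free $DP$ algebra on the free rank-one $R$-module with basis $x$. $A_+=A\oplus R$ is the unital algebra with $(a,r)(b,s)=(ab+sa+rb,rs)$. $\Omega^{CA}_{A/R}=(A_+\otimes A)/(a\otimes b-1\otimes ab+b\otimes a)$ with $da=[1\otimes a]$. A left $U(A)$-module is an $A_+$-module $M$ with pairwise commuting additive operators $\phi_p$ ($p$ prime) satisfying $p\phi_p=0$, $\phi_p(rx)=r^p\phi_p(x)$ for $r\in R$, and $\phi_p(ax)=0$ for $a\in A$; set $\phi_1=\mathrm{id}$, $\phi_{p^e}=\phi_p^e$, $\phi_n=0$ for $n>1$ not a prime power. A $DP$ derivation $s:A\to M$ is an $R$-linear map with $s(ab)=as(b)+bs(a)$ and $s(\gamma_n a)=\phi_n(sa)+\sum_{i+j=n,\,i,j\ge1}\gamma_i(a)\phi_j(sa)$.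 There is a unique $U(A)$-module structure on $\Omega^{CA}_{A/R}$ extending its $A_+$-module structure for which $d$ is a $DP$ derivation; this is the structure used. *)

From HB Require Import structures.
From mathcomp Require Import all_boot all_algebra.
Set Implicit Arguments. Unset Strict Implicit. Unset Printing Implicit Defensive.
Import GRing.Theory.
Local Open Scope ring_scope.

Section DP.
Variable R : comPzRingType.

Definition is_ncalg (A : lmodType R) (mul : A -> A -> A) : Prop :=
  [/\ forall a b c, mul a (mul b c) = mul (mul a b) c,
      forall a b, mul a b = mul b a,
      forall a b c, mul (a + b) c = mul a c + mul b c &
      forall (r : R) a b, mul (r *: a) b = r *: mul a b].

Definition powA (A : Type) (mul : A -> A -> A) (a : A) (n : nat) : A :=
  iter n.-1 (mul a) a.

Definition dp_coef (m n : nat) : nat := (m * n)`! %/ (m`! * n`! ^ m).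

Definition is_DPalg (A : lmodType R) (mul : A -> A -> A) (gam : nat -> A -> A)
  : Prop :=
  is_ncalg mul /\ (forall a, gam 1%N a = a) /\
  [/\ 
      forall n a b, (0 < n)%N ->
        gam n (a + b) = gam n a + \sum_(1 <= i < n) mul (gam i a) (gam (n - i)%N b)
                        + gam n b,
      forall n a b, (0 < n)%N -> gam n (mul a b) = mul (powA mul a n) (gam n b),
      forall n (r : R) b, (0 < n)%N -> gam n (r *: b) = r ^+ n *: gam n b,
      forall m n a, (0 < m)%N -> (0 < n)%N ->
        mul (gam m a) (gam n a) = gam (m + n)%N a *+ 'C(m + n, m) &
      forall m n a, (0 < m)%N -> (0 < n)%N ->
        gam m (gam n a) = gam (m * n)%N a *+ dp_coef m n].

Definition gam_basis (A : lmodType R) (gam : nat -> A -> A) (x : A) : Prop :=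
  (forall a : A, exists (N : nat) (c : nat -> R),
      a = \sum_(1 <= n < N) c n *: gam n x) /\
  (forall (N : nat) (c : nat -> R),
      \sum_(1 <= n < N) c n *: gam n x = 0 ->
      forall n, (1 <= n < N)%N -> c n = 0).

(* A_+ = A (+) R, represented as pairs (a, r). *)
Definition Aplus (A : lmodType R) := (A * R)%type.

(* An A_+-module: an R-module M with an action of A (the element (a,r) of
   A_+ acts by m |-> act a m + r *: m). *)
Definition is_Aplus_mod (A : lmodType R) (mul : A -> A -> A)
  (M : lmodType R) (act : A -> M -> M) : Prop :=
  [/\ forall a b m, act (a + b) m = act a m + act b m,
      forall (r : R) a m, act (r *: a) m = r *: act a m,
      forall a m n, act a (m + n) = act a m + act a n,
      forall (r : R) a m, act a (r *: m) = r *: act a m &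
      forall a b m, act (mul a b) m = act a (act b m)].

Definition aact (A : lmodType R) (M : lmodType R) (act : A -> M -> M)
  (c : Aplus A) (m : M) : M := act c.1 m + c.2 *: m.

Definition aplus_natmul (A : lmodType R) (c : Aplus A) (p : nat) : Aplus A :=
  (c.1 *+ p, c.2 *+ p).

Definition is_Aplus_lin (A : lmodType R) (M N : lmodType R)
  (act : A -> M -> M) (actN : A -> N -> N) (f : M -> N) : Prop :=
  [/\ forall m n, f (m + n) = f m + f n,
      forall (r : R) m, f (r *: m) = r *: f m &
      forall a m, f (act a m) = actN a (f m)].

Definition is_der (A : lmodType R) (mul : A -> A -> A) (M : lmodType R)
  (act : A -> M -> M) (s : A -> M) : Prop :=
  [/\ forall a b, s (a + b) = s a + s b,
      forall (r : R) a, s (r *: a) = r *: s a &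
      forall a b, s (mul a b) = act a (s b) + act b (s a)].

(* (M, act, d) is Omega^{CA}_{A/R} = (A_+ (x) A)/(a(x)b - 1(x)ab + b(x)a),
   d a = [1 (x) a], characterized by the universal property of this
   presentation: A_+-linear maps out of it are the derivations out of A. *)
Definition is_OmegaCA (A : lmodType R) (mul : A -> A -> A)
  (M : lmodType R) (act : A -> M -> M) (d : A -> M) : Prop :=
  [/\ is_Aplus_mod mul act, is_der mul act d &
      forall (N : lmodType R) (actN : A -> N -> N) (s : A -> N),
        is_Aplus_mod mul actN -> is_der mul actN s ->
        (exists f : M -> N, is_Aplus_lin act actN f /\ forall a, f (d a) = s a) /\
        (forall f g : M -> N, is_Aplus_lin act actN f -> is_Aplus_lin act actN g ->
           (forall a, f (d a) = s a) -> (forall a, g (d a) = s a) -> f =1 g)].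

Definition is_UA_mod (A : lmodType R) (M : lmodType R) (act : A -> M -> M)
  (phi : nat -> M -> M) : Prop :=
  forall p, prime p ->
  [/\ forall m n, phi p (m + n) = phi p m + phi p n,
      forall m, phi p m *+ p = 0,
      forall (r : R) m, phi p (r *: m) = r ^+ p *: phi p m,
      forall a m, phi p (act a m) = 0 &
      forall q m, prime q -> phi p (phi q m) = phi q (phi p m)].

Definition phin (M : lmodType R) (phi : nat -> M -> M) (n : nat) (m : M) : M :=
  if n == 1%N then m else
  if primes n is [:: p] then iter (logn p n) (phi p) m else 0.

Definition is_DPder (A : lmodType R) (mul : A -> A -> A) (gam : nat -> A -> A)
  (M : lmodType R) (act : A -> M -> M) (phi : nat -> M -> M) (s : A -> M) : Prop :=
  [/\ forall a b, s (a + b) = s a + s b,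
      forall (r : R) a, s (r *: a) = r *: s a,
      forall a b, s (mul a b) = act a (s b) + act b (s a) &
      forall n a, (0 < n)%N ->
        s (gam n a) = phin phi n (s a)
                      + \sum_(1 <= i < n) act (gam i a) (phin phi (n - i)%N (s a))].

Definition gamP (A : lmodType R) (gam : nat -> A -> A) (x : A) (i : nat) : Aplus A :=
  if i is 0%N then (0, 1) else (gam i x, 0).

End DP.

(* Writing Psi_n = phi_n(dx), the DP-derivation rule for d at x reads
   d gamma_n = sum_i gamma_i Psi_(n-i); since gamma_i gamma_k = C(i+k, i) gamma_(i+k)
   and sum_i (-1)^i C(m, i) = [m = 0], this convolution is inverted by
   sum_i (-1)^i gamma_i.  Hence Omega is spanned over A_+ by dx and the Psi_n, and
   Psi_n vanishes unless n = p^e, when it is killed by p.  Spanning follows because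
   the quotient of Omega by this span receives the zero derivation, so by the
   universal property it is zero.  For independence, take an A_+-module N and values
   Phi_n of the same shape as Psi_n; since C(i + j, i) = C(m, i) + C(m, j) modulo p
   whenever i + j = m + p^e, the R-linear map gamma_n |-> sum_i gamma_i Phi_(n-i) is
   a derivation, so it factors through Omega by a map sending Psi_n to Phi_n.  The
   choices N = A_+ with Phi = [n = 1] and N = A_+/pA_+ with Phi = [n = p^e] isolate
   the coefficients of a relation. *)

From HB Require Import structures.
From mathcomp Require Import all_boot all_algebra zify.
From mathcomp Require Import boolp.
Set Implicit Arguments. Unset Strict Implicit. Unset Printing Implicit Defensive.
Import GRing.Theory.
Local Open Scope ring_scope.

Section BinomialModPrime.
Local Open Scope nat_scope.

Lemma prime_dvd_bin_pexp p e i : prime p -> 0 < i < p ^ e -> p %| 'C(p ^ e, i).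
Proof.
move=> p_pr /andP[i_gt0 lt_i_pe]; apply/negPn/negP => ndvd_p.
have co_pe : coprime (p ^ e) 'C(p ^ e, i) by rewrite coprimeXl // prime_coprime.
have : p ^ e %| i * 'C(p ^ e, i).
  by case: i i_gt0 {lt_i_pe ndvd_p co_pe} => // k _; rewrite -mul_bin_diag dvdn_mulr.
by rewrite Gauss_dvdl // => /(dvdn_leq i_gt0); rewrite leqNgt lt_i_pe.
Qed.

(* (1 + X)^(p^e) = 1 + X^(p^e) modulo p. *)
Lemma binD_pexp_mod p e m i : prime p ->
  'C(m + p ^ e, i) = 'C(m, i) + 'C(m, i - p ^ e) * (p ^ e <= i) %[mod p].
Proof.
move=> p_pr; set n := p ^ e.
have n_gt0 : 0 < n by rewrite expn_gt0 prime_gt0.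
elim: m i => [|m IHm] i.
  rewrite add0n bin0n.
  case: (ltngtP i n) => [lt_in|lt_ni|->]; last by rewrite binn subnn bin0 (gtn_eqF n_gt0).
  - case: i lt_in => [|i] lt_in; first by rewrite bin0 muln0.
    rewrite muln0 addn0 /=; apply/eqP.
    by rewrite eqn_mod_dvd // subn0 prime_dvd_bin_pexp.
  - by rewrite bin_small // bin0n subn_eq0 leqNgt lt_ni (gtn_eqF (ltn_trans n_gt0 lt_ni)).
case: i => [|i]; first by rewrite !bin0 leqNgt n_gt0.
have shiftS : 'C(m.+1, i.+1 - n) * (n <= i.+1)
              = 'C(m, i.+1 - n) * (n <= i.+1) + 'C(m, i - n) * (n <= i).
  case: (leqP n i) => [le_ni|lt_in]; first by rewrite (leqW le_ni) subSn // binS !muln1.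
  case: (leqP n i.+1) => [le_nSi|]; last by rewrite !muln0.
  by rewrite muln0 addn0 !muln1 (_ : i.+1 - n = 0) ?bin0 //; lia.
rewrite addSn !binS shiftS addnACA -modnDm IHm IHm modnDm.
by rewrite addnACA.
Qed.

Lemma bin_split_pexp_mod p e m i j : prime p -> i + j = m + p ^ e -> 0 < j ->
  'C(i + j, i) = 'C(m, i) + 'C(m, j) %[mod p].
Proof.
move=> p_pr eq_ij j_gt0; rewrite eq_ij binD_pexp_mod //.
case: leqP => [le_pe_i|lt_i_pe]; last by rewrite muln0 (@bin_small m j) //; lia.
have -> : i - p ^ e = m - j by lia.
by rewrite muln1 bin_sub //; lia.
Qed.

Lemma bin_split_succ m i j : i + j = m.+1 -> 0 < i ->
  'C(i + j, i) = 'C(m, i) + 'C(m, j).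
Proof.
case: i => // i; rewrite addSn => -[eq_ij] _.
rewrite eq_ij binS -[in 'C(m, j)]bin_sub -eq_ij ?addnK //.
exact: leq_addl.
Qed.

End BinomialModPrime.

Lemma sum_triangle (V : nmodType) n (F : nat -> nat -> V) :
  \sum_(0 <= i < n) \sum_(0 <= k < n - i) F i (i + k)%N =
  \sum_(0 <= m < n) \sum_(0 <= i < m.+1) F i m.
Proof.
elim: n => [|n IHn]; first by rewrite !big_geq.
rewrite big_nat_recr //= [in RHS]big_nat_recr //= -IHn subSnn big_nat1 addn0.
have -> : \sum_(0 <= i < n) \sum_(0 <= k < n.+1 - i) F i (i + k)%N =
          \sum_(0 <= i < n) (\sum_(0 <= k < n - i) F i (i + k)%N + F i n).
  apply: eq_big_nat => i /andP[_ lt_in]; have -> : (n.+1 - i = (n - i).+1)%N by lia.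
  rewrite big_nat_recr //=; congr (_ + _); congr F; lia.
by rewrite big_split /= [in RHS]big_nat_recr //= addrA.
Qed.

Lemma sum_sign_bin (K : comPzRingType) m :
  \sum_(0 <= i < m.+1) ((-1) ^+ i *+ 'C(m, i) : K) = (m == 0%N)%:R.
Proof.
rewrite big_mkord; have := exprDn (1 : K) (-1) m.
rewrite subrr expr0n => ->; apply: eq_bigr => i _.
by rewrite expr1n mul1r.
Qed.

Lemma sum_nat_pred1 (V : nmodType) (P : pred nat) a b k (F : nat -> V) :
  (a <= k < b)%N -> P k ->
  \sum_(a <= i < b | P i) (if i == k then F i else 0) = F k.
Proof.
move=> k_in Pk; rewrite big_mkcond /= (bigD1_seq k) ?mem_index_iota ?iota_uniq //=.
by rewrite eqxx Pk big1 ?addr0 // => i /negbTE ->; case: (P i).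
Qed.

Lemma eq_prime_pexp p e q f : prime p -> prime q -> (0 < e)%N -> (0 < f)%N ->
  (q ^ f = p ^ e)%N -> q = p /\ f = e.
Proof.
move=> p_pr q_pr e_gt0 f_gt0 eq_pe.
have eq_qp : q = p.
  by have := congr1 primes eq_pe; rewrite !primesX // !primes_prime // => -[].
by split=> //; subst q; apply: (expnI (prime_gt1 p_pr)).
Qed.

Lemma pexp_gt1 p e : prime p -> (0 < e)%N -> (1 < p ^ e)%N.
Proof. by move=> p_pr e_gt0; rewrite (ltn_exp2l 0 e (prime_gt1 p_pr)). Qed.

Lemma sum_pexp_pred1 (V : nmodType) (F : nat -> nat -> V) p e B :
  prime p -> (0 < e < B)%N -> (p < B)%N ->
  \sum_(0 <= q < B | prime q) \sum_(1 <= f < B) (if (q ^ f == p ^ e)%N then F q f else 0)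
  = F p e.
Proof.
move=> p_pr e_range lt_pB; have e_gt0 : (0 < e)%N by case/andP: e_range.
rewrite -(@sum_nat_pred1 _ prime 0 B p (F^~ e)) //.
apply: eq_bigr => q q_pr; case: eqP => [->|/eqP ne_qp].
  rewrite -(@sum_nat_pred1 _ xpredT 1 B e (F p)) //.
  by apply: eq_bigr => f _; rewrite eqn_exp2l ?prime_gt1.
rewrite big1_seq // => f /andP[_]; rewrite mem_index_iota => /andP[f_gt0 _].
case: eqP => // /(eq_prime_pexp p_pr q_pr e_gt0 f_gt0)[eq_qp _].
by rewrite eq_qp eqxx in ne_qp.
Qed.

(* Submodules are Prop-valued (the span used below is not decidable), so
   quotients are built as types of cosets. *)
Section Quotient.
Variable R : comPzRingType.

Record psubmod (V : lmodType R) := PSubmod {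
  psub :> V -> Prop;
  psub0 : psub 0;
  psubD : forall u v, psub u -> psub v -> psub (u + v);
  psubZ : forall (r : R) u, psub u -> psub (r *: u) }.

Definition quotmod (V : lmodType R) (S : psubmod V) :=
  {C : V -> Prop | exists v, C = fun w => S (w - v)}.

HB.instance Definition _ V S := gen_eqMixin (@quotmod V S).
HB.instance Definition _ V S := gen_choiceMixin (@quotmod V S).

Section Operations.
Variables (V : lmodType R) (S : psubmod V).

Definition qproj (v : V) : quotmod S :=
  exist _ (fun w => S (w - v)) (ex_intro _ v erefl).
Definition qrepr (q : quotmod S) : V := projT1 (cid (proj2_sig q)).

Lemma qreprK q : qproj (qrepr q) = q.
Proof.
rewrite /qrepr; case: (cid _) => v /= def_q.
case: q def_q => C ? /= def_C; subst C.
by congr exist; apply: Prop_irrelevance.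
Qed.

Lemma qproj_surj q : exists v, q = qproj v.
Proof. by exists (qrepr q); rewrite qreprK. Qed.

Lemma psubN u : S u -> S (- u).
Proof. by rewrite -scaleN1r; apply: psubZ. Qed.

Lemma psubB u v : S u -> S v -> S (u - v).
Proof. by move=> Su Sv; apply: psubD => //; apply: psubN. Qed.

Lemma qproj_eq v w : qproj v = qproj w <-> S (v - w).
Proof.
split.
  move=> /(congr1 (@proj1_sig _ _)) /= /(congr1 (fun C => C v)).
  by rewrite subrr => <-; apply: psub0.
move=> Svw; apply: eq_exist_uncurried.
have eqC : (fun u => S (u - v)) = (fun u => S (u - w)).
  apply: funext => u; apply: propext; split => Su.
    by have := psubD Su Svw; rewrite addrA subrK.
  by have := psubB Su Svw; rewrite opprB addrA subrK.
by exists eqC; apply: Prop_irrelevance.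
Qed.

Definition qadd (a b : quotmod S) := qproj (qrepr a + qrepr b).
Definition qopp (a : quotmod S) := qproj (- qrepr a).
Definition qscale (r : R) (a : quotmod S) := qproj (r *: qrepr a).

Lemma qaddE u v : qadd (qproj u) (qproj v) = qproj (u + v).
Proof.
apply/qproj_eq.
have /qproj_eq Su := qreprK (qproj u); have /qproj_eq Sv := qreprK (qproj v).
by have := psubD Su Sv; rewrite addrACA opprD.
Qed.

Lemma qoppE u : qopp (qproj u) = qproj (- u).
Proof.
apply/qproj_eq; have /qproj_eq Su := qreprK (qproj u).
by rewrite opprK addrC -opprB; apply: psubN.
Qed.

Lemma qscaleE r u : qscale r (qproj u) = qproj (r *: u).
Proof.
apply/qproj_eq; have /qproj_eq Su := qreprK (qproj u).
by have := psubZ r Su; rewrite scalerBr.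
Qed.

Lemma qaddA : associative qadd.
Proof.
move=> a b c; have [u ->] := qproj_surj a; have [v ->] := qproj_surj b.
by have [w ->] := qproj_surj c; rewrite !qaddE addrA.
Qed.

Lemma qaddC : commutative qadd.
Proof.
move=> a b; have [u ->] := qproj_surj a; have [v ->] := qproj_surj b.
by rewrite !qaddE addrC.
Qed.

Lemma qadd0 : left_id (qproj 0) qadd.
Proof. by move=> a; have [u ->] := qproj_surj a; rewrite qaddE add0r. Qed.

Lemma qaddN : left_inverse (qproj 0) qopp qadd.
Proof. by move=> a; have [u ->] := qproj_surj a; rewrite qoppE qaddE addNr. Qed.

HB.instance Definition _ := GRing.isZmodule.Build (quotmod S) qaddA qaddC qadd0 qaddN.

Lemma qprojD u v : qproj (u + v) = qproj u + qproj v.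
Proof. by rewrite -qaddE. Qed.

Lemma qprojMn u k : qproj (u *+ k) = qproj u *+ k.
Proof. by elim: k => [//|k IHk]; rewrite !mulrS qprojD IHk. Qed.

Lemma qscaleA a b q : qscale a (qscale b q) = qscale (a * b) q.
Proof. by have [u ->] := qproj_surj q; rewrite !qscaleE scalerA. Qed.

Lemma qscale1 : left_id 1 qscale.
Proof. by move=> q; have [u ->] := qproj_surj q; rewrite qscaleE scale1r. Qed.

Lemma qscaleDr : right_distributive qscale +%R.
Proof.
move=> a q q'; have [u ->] := qproj_surj q; have [v ->] := qproj_surj q'.
by rewrite -qprojD !qscaleE -qprojD scalerDr.
Qed.

Lemma qscaleDl q : {morph qscale^~ q : a b / a + b}.
Proof. by move=> a b; have [u ->] := qproj_surj q; rewrite !qscaleE scalerDl qprojD. Qed.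

HB.instance Definition _ :=
  GRing.Zmodule_isLmodule.Build R (quotmod S) qscaleA qscale1 qscaleDr qscaleDl.

Lemma qprojZ r u : qproj (r *: u) = r *: qproj u.
Proof. by rewrite -qscaleE. Qed.

Lemma qproj_eq0 u : qproj u = 0 <-> S u.
Proof. by rewrite -[u in S u]subr0; apply: qproj_eq. Qed.

End Operations.
End Quotient.

Section AplusModule.
Variables (R : comPzRingType) (A : lmodType R) (mul : A -> A -> A).
Variables (N : lmodType R) (act : A -> N -> N).
Hypothesis modN : is_Aplus_mod mul act.

Lemma actDl a b m : act (a + b) m = act a m + act b m.
Proof. by case: modN. Qed.
Lemma actZl r a m : act (r *: a) m = r *: act a m.
Proof. by case: modN. Qed.
Lemma actDr a m n : act a (m + n) = act a m + act a n.
Proof. by case: modN. Qed.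
Lemma actZr r a m : act a (r *: m) = r *: act a m.
Proof. by case: modN. Qed.
Lemma actM a b m : act (mul a b) m = act a (act b m).
Proof. by case: modN. Qed.

Lemma act0l m : act 0 m = 0.
Proof. by rewrite -(scale0r (0 : A)) actZl scale0r. Qed.
Lemma act0r a : act a 0 = 0.
Proof. by have := actZr 0 a 0; rewrite !scale0r. Qed.
Lemma actNr a m : act a (- m) = - act a m.
Proof. by rewrite -scaleN1r actZr scaleN1r. Qed.
Lemma actMnl a m k : act (a *+ k) m = act a m *+ k.
Proof. by elim: k => [|k IHk]; rewrite ?act0l // !mulrS actDl IHk. Qed.
Lemma actMnr a m k : act a (m *+ k) = act a m *+ k.
Proof. by elim: k => [|k IHk]; rewrite ?act0r // !mulrS actDr IHk. Qed.
Lemma act_suml m I (r : seq I) (P : pred I) (F : I -> A) :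
  act (\sum_(i <- r | P i) F i) m = \sum_(i <- r | P i) act (F i) m.
Proof. exact: (big_morph (act^~ m) (fun a b => actDl a b m) (act0l m)). Qed.
Lemma act_sumr a I (r : seq I) (P : pred I) (F : I -> N) :
  act a (\sum_(i <- r | P i) F i) = \sum_(i <- r | P i) act a (F i).
Proof. exact: (big_morph (act a) (actDr a) (act0r a)). Qed.

(* [Aplus A] carries no module structure; [A * R^o] is the same type with
   the product R-module structure. *)
Lemma aact1 m : aact act (0, 1) m = m.
Proof. by rewrite /aact act0l add0r scale1r. Qed.
Lemma aact0l m : aact act (0 : A * R^o) m = 0.
Proof. by rewrite /aact act0l scale0r addr0. Qed.
Lemma aactDl (c c' : A * R^o) m : aact act (c + c') m = aact act c m + aact act c' m.
Proof. by rewrite /aact actDl scalerDl addrACA. Qed.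
Lemma aactZl r (c : A * R^o) m : aact act (r *: c) m = r *: aact act c m.
Proof. by rewrite /aact actZl scalerDr scalerA. Qed.
Lemma aactMnl (c : A * R^o) m k : aact act (c *+ k) m = aact act c m *+ k.
Proof. by elim: k => [|k IHk]; rewrite ?aact0l // !mulrS aactDl IHk. Qed.

Lemma aactDr c m n : aact act c (m + n) = aact act c m + aact act c n.
Proof. by rewrite /aact actDr scalerDr addrACA. Qed.
Lemma aact0r c : aact act c 0 = 0.
Proof. by rewrite /aact act0r scaler0 addr0. Qed.
Lemma aactMnr c m k : aact act c (m *+ k) = aact act c m *+ k.
Proof. by elim: k => [|k IHk]; rewrite ?aact0r // !mulrS aactDr IHk. Qed.
Lemma aact_sumr c I (r : seq I) (P : pred I) (F : I -> N) :
  aact act c (\sum_(i <- r | P i) F i) = \sum_(i <- r | P i) aact act c (F i).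
Proof. exact: (big_morph (aact act c) (aactDr c) (aact0r c)). Qed.

Lemma aplus_natmulE (c : A * R^o) k : aplus_natmul c k = c *+ k.
Proof.
elim: k => [|k IHk]; first by case: c.
by move: IHk; rewrite /aplus_natmul !mulrS => <-.
Qed.

End AplusModule.

Section QuotientAction.
Variables (R : comPzRingType) (A : lmodType R) (mul : A -> A -> A).
Variables (V : lmodType R) (S : psubmod V) (act : A -> V -> V).
Hypothesis modV : is_Aplus_mod mul act.
Hypothesis actS : forall a v, S v -> S (act a v).

Definition qact (a : A) (q : quotmod S) : quotmod S := qproj S (act a (qrepr q)).

Lemma qactE a v : qact a (qproj S v) = qproj S (act a v).
Proof.
apply/qproj_eq; have /qproj_eq/(actS a) := qreprK (qproj S v).
by rewrite (actDr modV) (actNr modV).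
Qed.

Lemma qaactE c v : aact qact c (qproj S v) = qproj S (aact act c v).
Proof. by rewrite /aact qactE qprojD qprojZ. Qed.

Lemma qact_mod : is_Aplus_mod mul qact.
Proof.
split=> [a b q|r a q|a q q'|r a q|a b q]; have [v ->] := qproj_surj q.
- by rewrite !qactE (actDl modV) qprojD.
- by rewrite !qactE (actZl modV) qprojZ.
- by have [v' ->] := qproj_surj q'; rewrite -qprojD !qactE (actDr modV) qprojD.
- by rewrite -qprojZ !qactE (actZr modV) qprojZ.
- by rewrite !qactE (actM modV).
Qed.

End QuotientAction.

Section Multiples.
Variables (R : comPzRingType) (V : lmodType R) (p : nat).

Definition pmul (v : V) := exists b, v = b *+ p.

Lemma pmul0 : pmul 0.
Proof. by exists 0; rewrite mul0rn. Qed.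

Lemma pmulD u v : pmul u -> pmul v -> pmul (u + v).
Proof. by move=> [b ->] [b' ->]; exists (b + b'); rewrite mulrnDl. Qed.

Lemma pmulZ r u : pmul u -> pmul (r *: u).
Proof. by move=> [b ->]; exists (r *: b); rewrite scalerMnr. Qed.

Definition pmul_submod := PSubmod pmul0 pmulD pmulZ.

Lemma pmul_act (A : lmodType R) (mul : A -> A -> A) (act : A -> V -> V) a u :
  is_Aplus_mod mul act -> pmul u -> pmul (act a u).
Proof. by move=> modV [b ->]; exists (act a b); rewrite (actMnr modV). Qed.

End Multiples.

Section AplusLinear.
Variables (R : comPzRingType) (A M N : lmodType R).
Variables (actM : A -> M -> M) (actN : A -> N -> N) (f : M -> N).
Hypothesis linf : is_Aplus_lin actM actN f.

Lemma Aplus_lin0 : f 0 = 0.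
Proof. by case: linf => _ fZ _; rewrite -(scale0r (0 : M)) fZ scale0r. Qed.

Lemma Aplus_lin_sum I (r : seq I) (P : pred I) (F : I -> M) :
  f (\sum_(i <- r | P i) F i) = \sum_(i <- r | P i) f (F i).
Proof. by case: linf => fD _ _; apply: (big_morph f fD Aplus_lin0). Qed.

Lemma Aplus_lin_aact c m : f (aact actM c m) = aact actN c (f m).
Proof. by case: linf => fD fZ fA; rewrite /aact fD fZ fA. Qed.

End AplusLinear.

Section NCAlgebra.
Variables (R : comPzRingType) (A : lmodType R) (mul : A -> A -> A).
Hypothesis algA : is_ncalg mul.

Lemma nmulA a b c : mul a (mul b c) = mul (mul a b) c.
Proof. by case: algA. Qed.
Lemma nmulC a b : mul a b = mul b a.
Proof. by case: algA. Qed.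
Lemma nmulDl a b c : mul (a + b) c = mul a c + mul b c.
Proof. by case: algA. Qed.
Lemma nmulZl r a b : mul (r *: a) b = r *: mul a b.
Proof. by case: algA. Qed.
Lemma nmulDr a b c : mul c (a + b) = mul c a + mul c b.
Proof. by rewrite !(nmulC c) nmulDl. Qed.
Lemma nmulZr r a b : mul b (r *: a) = r *: mul b a.
Proof. by rewrite !(nmulC b) nmulZl. Qed.
Lemma nmul0l a : mul 0 a = 0.
Proof. by have := nmulZl 0 0 a; rewrite !scale0r. Qed.
Lemma nmul_suml b I (r : seq I) (P : pred I) (F : I -> A) :
  mul (\sum_(i <- r | P i) F i) b = \sum_(i <- r | P i) mul (F i) b.
Proof. exact: (big_morph (mul^~ b) (fun a c => nmulDl a c b) (nmul0l b)). Qed.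
Lemma nmul_sumr b I (r : seq I) (P : pred I) (F : I -> A) :
  mul b (\sum_(i <- r | P i) F i) = \sum_(i <- r | P i) mul b (F i).
Proof. by rewrite nmulC nmul_suml; under eq_bigr do rewrite nmulC. Qed.

(* A_+ as a module over itself. *)
Definition regact (a : A) (c : A * R^o) : A * R^o := (mul a c.1 + c.2 *: a, 0).

Lemma regact_mod : is_Aplus_mod mul regact.
Proof.
have pairD (u u' : A) (v v' : R) : ((u, v) : A * R^o) + (u', v') = (u + u', v + v').
  by [].
have pairZ r (u : A) (v : R) : r *: ((u, v) : A * R^o) = (r *: u, r * v) by [].
split=> [a b [v r]|r a [v s]|a [v r] [w s]|r a [v s]|a b [v r]];
  rewrite /regact ?pairD ?pairZ /=; congr (_, _); rewrite ?addr0 ?mulr0 //.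
- by rewrite nmulDl scalerDr addrACA.
- by rewrite nmulZl scalerDr !scalerA mulrC.
- by rewrite nmulDr scalerDl addrACA.
- by rewrite nmulZr scalerDr scalerA.
- by rewrite scale0r addr0 nmulDr nmulZr nmulA.
Qed.

Lemma aact_regact1 (c : A * R^o) : aact regact c (0, 1) = c.
Proof.
case: c => a r; apply: injective_projections => /=.
  by rewrite nmulC nmul0l add0r scale1r scaler0 addr0.
by rewrite add0r; apply: mulr1.
Qed.

Lemma act_aact (N : lmodType R) (act : A -> N -> N) :
  is_Aplus_mod mul act -> forall a c m, act a (aact act c m) = aact act (regact a c) m.
Proof.
move=> modN a c m; rewrite /aact /= (actDr modN) (actZr modN) scale0r addr0.
by rewrite (actDl modN) (actM modN) (actZl modN).
Qed.

End NCAlgebra.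

Section DividedPowerConvolution.
Variables (R : comPzRingType) (A : lmodType R) (mul : A -> A -> A).
Variables (gam : nat -> A -> A) (x : A).
Hypothesis dpA : is_DPalg mul gam.
Local Notation g n := (gam n x).

Lemma gam_mul i j : (0 < i)%N -> (0 < j)%N ->
  mul (g i) (g j) = g (i + j)%N *+ 'C(i + j, i).
Proof. by case: dpA => _ [_ [_ _ _ gM _]] i_gt0 j_gt0; rewrite gM. Qed.

Variables (N : lmodType R) (act : A -> N -> N).
Hypothesis modN : is_Aplus_mod mul act.

Lemma aact_gamP i m : (0 < i)%N -> aact act (gamP gam x i) m = act (g i) m.
Proof. by case: i => // i _; rewrite /aact scale0r addr0. Qed.

Lemma aact_gamP_mul i k m :
  aact act (gamP gam x i) (aact act (gamP gam x k) m) =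
  aact act (gamP gam x (i + k)) m *+ 'C(i + k, i).
Proof.
case: i => [|i]; first by rewrite (aact1 modN) bin0.
case: k => [|k]; first by rewrite (aact1 modN) addn0 binn.
by rewrite !aact_gamP ?addn_gt0 // -(actM modN) gam_mul // (actMnl modN).
Qed.

Definition gconv (Phi : nat -> N) n :=
  \sum_(0 <= i < n) aact act (gamP gam x i) (Phi (n - i)%N).

(* Moebius inversion for the convolution with the divided powers: the
   inverse of [sum_i gamma_i t^i] is [sum_i (-1)^i gamma_i t^i]. *)
Lemma gconv_inversion (Psi : nat -> N) n : (0 < n)%N ->
  \sum_(0 <= i < n) (-1) ^+ i *: aact act (gamP gam x i) (gconv Psi (n - i)%N)
  = Psi n.
Proof.
move=> n_gt0; pose F i m :=
  ((-1) ^+ i *: aact act (gamP gam x m) (Psi (n - m)%N)) *+ 'C(m, i).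
transitivity (\sum_(0 <= i < n) \sum_(0 <= k < n - i) F i (i + k)%N).
  apply: eq_big_nat => i _; rewrite /gconv (aact_sumr modN) scaler_sumr.
  by apply: eq_big_nat => k _; rewrite /F aact_gamP_mul scalerMnr subnDA.
rewrite sum_triangle.
transitivity (\sum_(0 <= m < n)
  ((m == 0)%N%:R *: aact act (gamP gam x m) (Psi (n - m)%N))).
  apply: eq_big_nat => m _; rewrite /F -sum_sign_bin scaler_suml.
  by apply: eq_big_nat => i _; rewrite scalerMnl.
rewrite big_ltn // big1_seq ?addr0 => [|m]; first by rewrite scale1r subn0 (aact1 modN).
by rewrite /= mem_index_iota => /andP[m_gt0 _]; rewrite (gtn_eqF m_gt0) scale0r.
Qed.

Lemma act_gconv (Phi : nat -> N) i j : (0 < i)%N ->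
  act (g i) (gconv Phi j) =
  \sum_(0 <= m < i + j) aact act (gamP gam x m) (Phi (i + j - m)%N) *+ 'C(m, i).
Proof.
move=> i_gt0; rewrite -aact_gamP // /gconv (aact_sumr modN).
rewrite [RHS](big_cat_nat _ (n := i)) ?leq_addr //= [X in X + _]big1_seq ?add0r.
  rewrite -[in RHS](add0n i) big_addn !add0n addKn; apply: eq_big_nat => k _.
  by rewrite aact_gamP_mul [(k + i)%N]addnC subnDl.
by move=> m; rewrite mem_index_iota => /andP[_ lt_mi]; rewrite bin_small // mulr0n.
Qed.

(* The shape of the values phi_n(dx): zero unless n is a prime power p^e,
   and then killed by p. *)
Definition pexp_torsion (Phi : nat -> N) :=
  forall n, (1 < n)%N ->
    Phi n = 0 \/ exists p e, [/\ prime p, n = (p ^ e)%N & Phi n *+ p = 0].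

Lemma pexp_torsion_bin_split (Phi : nat -> N) n m i j :
  pexp_torsion Phi -> (0 < n)%N -> (0 < i)%N -> (0 < j)%N -> (i + j = m + n)%N ->
  Phi n *+ 'C(i + j, i) = Phi n *+ ('C(m, i) + 'C(m, j)).
Proof.
move=> torsPhi n_gt0 i_gt0 j_gt0 eq_ij.
case: (ltngtP n 1) => [|lt_1n|eq_n1]; first by rewrite ltnS leqNgt n_gt0.
  case: (torsPhi n lt_1n) => [->|[p [e [p_pr eq_n pPhi]]]]; first by rewrite !mul0rn.
  have modp := bin_split_pexp_mod p_pr (etrans eq_ij (congr1 (addn m) eq_n)) j_gt0.
  rewrite (divn_eq 'C(i + j, i) p) (divn_eq ('C(m, i) + 'C(m, j)) p) modp.
  by rewrite !mulrnDr !(mulnC _ p) !mulrnA pPhi !mul0rn.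
by rewrite (@bin_split_succ m) // eq_ij eq_n1 addn1.
Qed.

Lemma gconv_leibniz (Phi : nat -> N) i j :
  pexp_torsion Phi -> (0 < i)%N -> (0 < j)%N ->
  gconv Phi (i + j) *+ 'C(i + j, i) = act (g i) (gconv Phi j) + act (g j) (gconv Phi i).
Proof.
move=> torsPhi i_gt0 j_gt0.
rewrite (act_gconv Phi j i_gt0) (act_gconv Phi i j_gt0) [(j + i)%N]addnC -big_split /=.
rewrite /gconv -sumrMnl; apply: eq_big_nat => m /andP[_ lt_m_ij].
rewrite -mulrnDr -!(aactMnr modN); congr aact.
by apply: pexp_torsion_bin_split => //; lia.
Qed.

End DividedPowerConvolution.

Section BasisExtension.
Variables (R : comPzRingType) (A : lmodType R) (gam : nat -> A -> A) (x : A).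
Hypothesis basis : gam_basis gam x.
Local Notation g n := (gam n x).

Definition trunc (c : nat -> R) n k := if (k < n)%N then c k else 0.

Lemma sum_trunc (V : lmodType R) (v : nat -> V) c n n' : (n <= n')%N ->
  \sum_(1 <= k < n) c k *: v k = \sum_(1 <= k < n') trunc c n k *: v k.
Proof.
move=> le_nn'; rewrite (big_nat_widen _ _ _ _ _ le_nn') big_mkcond /=.
by apply: eq_big_nat => k _; rewrite /trunc; case: ifP; rewrite ?scale0r.
Qed.

Lemma sum_nat_delta (V : lmodType R) (v : nat -> V) n : (0 < n)%N ->
  \sum_(1 <= k < n.+1) (k == n)%:R *: v k = v n.
Proof.
move=> n_gt0; rewrite big_nat_recr //= eqxx scale1r big1_seq ?add0r // => k.
by rewrite /= mem_index_iota => /andP[_ lt_kn]; rewrite (ltn_eqF lt_kn) scale0r.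
Qed.

Lemma basis_coef_unique n c n' c' :
  \sum_(1 <= k < n) c k *: g k = \sum_(1 <= k < n') c' k *: g k ->
  forall k, (0 < k)%N -> trunc c n k = trunc c' n' k.
Proof.
rewrite (sum_trunc _ _ (leq_maxl n n')) (sum_trunc _ _ (leq_maxr n n')).
move/eqP; rewrite -subr_eq0 -sumrB; under eq_bigr do rewrite -scalerBl.
move=> /eqP eq0 k k_gt0; case: (ltnP k (maxn n n')) => [lt_k_max|].
  by apply/eqP; rewrite -subr_eq0; apply/eqP/(basis.2 _ _ eq0); rewrite k_gt0.
by rewrite geq_max /trunc => /andP[/leq_gtF -> /leq_gtF ->].
Qed.

Definition bsize a : nat := sval (cid (basis.1 a)).
Definition bcoef a : nat -> R := sval (cid (svalP (cid (basis.1 a)))).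

Lemma basis_expansion a : a = \sum_(1 <= k < bsize a) bcoef a k *: g k.
Proof. exact: (svalP (cid (svalP (cid (basis.1 a))))). Qed.

Variables (N : lmodType R) (T : nat -> N).

Definition basis_ext a : N := \sum_(1 <= k < bsize a) bcoef a k *: T k.

Lemma basis_ext_sum n c :
  basis_ext (\sum_(1 <= k < n) c k *: g k) = \sum_(1 <= k < n) c k *: T k.
Proof.
set a := \sum_(1 <= k < n) _; have eq_coef := basis_coef_unique (basis_expansion a).
rewrite /basis_ext (sum_trunc _ _ (leq_maxl n (bsize a))).
rewrite (sum_trunc _ _ (leq_maxr n (bsize a))).
by apply: eq_big_nat => k /andP[k_gt0 _]; rewrite eq_coef.
Qed.

Lemma basis_extD a b : basis_ext (a + b) = basis_ext a + basis_ext b.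
Proof.
rewrite {1}(basis_expansion a) {1}(basis_expansion b).
set n := maxn (bsize a) (bsize b).
rewrite (sum_trunc _ _ (leq_maxl _ _ : bsize a <= n)%N).
rewrite (sum_trunc _ _ (leq_maxr _ _ : bsize b <= n)%N) -big_split /=.
under eq_bigr do rewrite -scalerDl.
rewrite basis_ext_sum /basis_ext (sum_trunc _ _ (leq_maxl _ _ : bsize a <= n)%N).
rewrite (sum_trunc _ _ (leq_maxr _ _ : bsize b <= n)%N) -big_split /=.
by under [RHS]eq_bigr do rewrite -scalerDl.
Qed.

Lemma basis_extZ r a : basis_ext (r *: a) = r *: basis_ext a.
Proof.
rewrite {1}(basis_expansion a) scaler_sumr; under eq_bigr do rewrite scalerA.
rewrite basis_ext_sum /basis_ext scaler_sumr.
by under [RHS]eq_bigr do rewrite scalerA.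
Qed.

Lemma basis_ext0 : basis_ext 0 = 0.
Proof. by have := basis_extZ 0 0; rewrite !scale0r. Qed.

Lemma basis_ext_gam n : (0 < n)%N -> basis_ext (g n) = T n.
Proof.
by move=> n_gt0; rewrite -{1}(sum_nat_delta (gam^~ x) n_gt0) basis_ext_sum sum_nat_delta.
Qed.

Lemma basis_ext_der (mul : A -> A -> A) (act : A -> N -> N) :
  is_DPalg mul gam -> is_Aplus_mod mul act ->
  (forall i j, (0 < i)%N -> (0 < j)%N ->
     T (i + j)%N *+ 'C(i + j, i) = act (g i) (T j) + act (g j) (T i)) ->
  is_der mul act basis_ext.
Proof.
move=> dpA modN leibT; have algA : is_ncalg mul by case: dpA.
have ext_sum := big_morph basis_ext basis_extD basis_ext0.
have ext_muln a k : basis_ext (a *+ k) = basis_ext a *+ k.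
  by elim: k => [|k IHk]; rewrite ?basis_ext0 // !mulrS basis_extD IHk.
have act_sums n c n' c' :
    act (\sum_(1 <= i < n) c i *: g i) (\sum_(1 <= j < n') c' j *: T j) =
    \sum_(1 <= i < n) \sum_(1 <= j < n') (c i * c' j) *: act (g i) (T j).
  rewrite (act_suml modN); apply: eq_bigr => i _.
  rewrite (actZl modN) (act_sumr modN) scaler_sumr; apply: eq_bigr => j _.
  by rewrite (actZr modN) scalerA.
have leib_sums n c n' c' :
    basis_ext (mul (\sum_(1 <= i < n) c i *: g i) (\sum_(1 <= j < n') c' j *: g j)) =
    act (\sum_(1 <= i < n) c i *: g i) (\sum_(1 <= j < n') c' j *: T j) +
    act (\sum_(1 <= j < n') c' j *: g j) (\sum_(1 <= i < n) c i *: T i).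
  rewrite !act_sums (exchange_big_nat _ 1 n' 1 n) -big_split /=.
  rewrite (nmul_suml algA) ext_sum; apply: eq_big_nat => i /andP[i_gt0 _].
  rewrite (nmulZl algA) (nmul_sumr algA) scaler_sumr ext_sum -big_split /=.
  apply: eq_big_nat => j /andP[j_gt0 _].
  rewrite (nmulZr algA) scalerA (gam_mul x dpA) // basis_extZ ext_muln.
  by rewrite basis_ext_gam ?addn_gt0 ?i_gt0 // leibT // (mulrC (c' j)) -scalerDr.
split=> [|| a b]; [exact: basis_extD | exact: basis_extZ |].
by rewrite {1}(basis_expansion a) {1}(basis_expansion b) leib_sums -!basis_expansion.
Qed.

End BasisExtension.

Section PrimePowerOperators.
Variables (R : comPzRingType) (A M : lmodType R).
Variables (act : A -> M -> M) (phi : nat -> M -> M).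

Lemma phin1 m : phin phi 1 m = m.
Proof. by rewrite /phin eqxx. Qed.

Lemma phin_pexp p e m : prime p -> (0 < e)%N -> phin phi (p ^ e) m = iter e (phi p) m.
Proof.
move=> p_pr e_gt0; rewrite /phin gtn_eqF ?pexp_gt1 //.
by rewrite primesX // primes_prime // pfactorK.
Qed.

Lemma phin_pexp_cases k m : (1 < k)%N ->
  phin phi k m = 0 \/ exists p e, [/\ prime p, (0 < e)%N & k = (p ^ e)%N].
Proof.
move=> k_gt1; rewrite /phin gtn_eqF //.
case def_k: (primes k) => [|p [|? ?]]; [by left | right | by left].
have p_k : p \in primes k by rewrite def_k mem_seq1.
have p_pr : prime p by move: p_k; rewrite mem_primes => /andP[].
have k_pnat : p.-nat k by rewrite /pnat (ltnW k_gt1) def_k /= inE eqxx.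
by exists p, (logn p k); rewrite logn_gt0 -p_part part_pnat_id.
Qed.

Lemma phin_pexp_torsion p e m : is_UA_mod act phi -> prime p -> (0 < e)%N ->
  phin phi (p ^ e) m *+ p = 0.
Proof.
move=> UAphi p_pr; case: e => // e _; rewrite phin_pexp // iterS.
by case: (UAphi p p_pr).
Qed.

Lemma aact_pmul_phin_pexp mul p e b m :
  is_Aplus_mod mul act -> is_UA_mod act phi -> prime p -> (0 < e)%N ->
  aact act (aplus_natmul b p) (phin phi (p ^ e) m) = 0.
Proof.
move=> modM UAphi p_pr e_gt0; rewrite aplus_natmulE (aactMnl modM) -(aactMnr modM).
by rewrite phin_pexp_torsion // (aact0r modM).
Qed.

End PrimePowerOperators.

Section OmegaCA.
Variables (R : comPzRingType) (A : lmodType R) (mul : A -> A -> A).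
Variables (gam : nat -> A -> A) (x : A).
Variables (M : lmodType R) (act : A -> M -> M) (d : A -> M) (phi : nat -> M -> M).
Hypotheses (dpA : is_DPalg mul gam) (basis : gam_basis gam x).
Hypotheses (omega : is_OmegaCA mul act d) (dpd : is_DPder mul gam act phi d).
Local Notation g n := (gam n x).
Local Notation Psi := (fun k => phin phi k (d x)).

Let modM : is_Aplus_mod mul act. Proof. by case: omega. Qed.

Lemma d_gam n : (0 < n)%N -> d (g n) = gconv gam x act Psi n.
Proof.
move=> n_gt0; case: dpd => _ _ _ /(_ n x n_gt0) ->.
rewrite /gconv [RHS]big_ltn //= subn0 (aact1 modM); congr (_ + _).
by apply: eq_big_nat => i /andP[i_gt0 _]; rewrite aact_gamP.
Qed.

Lemma phin_d_gam n : (0 < n)%N ->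
  Psi n = \sum_(0 <= i < n) (-1) ^+ i *: aact act (gamP gam x i) (d (g (n - i)%N)).
Proof.
move=> n_gt0 /=; rewrite -{1}(gconv_inversion x dpA modM Psi n_gt0).
by apply: eq_big_nat => i /andP[_ lt_in]; rewrite d_gam // subn_gt0.
Qed.

Definition phi_comb (c' : nat -> nat -> A * R^o) B :=
  \sum_(0 <= p < B | prime p) \sum_(1 <= e < B) aact act (c' p e) (Psi (p ^ e)%N).

Definition spanned w :=
  exists (c : A * R^o) c' B, w = aact act c (d x) + phi_comb c' B.

Lemma phi_comb_widen c' B B' : (B <= B')%N ->
  phi_comb c' B = phi_comb (fun p e => if ((p < B) && (e < B))%N then c' p e else 0) B'.
Proof.
move=> le_BB'; rewrite /phi_comb (big_nat_widen 0 _ _ _ _ le_BB').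
rewrite big_mkcond [RHS]big_mkcond /=; apply: eq_big_nat => p _.
case: (prime p) => //=; case: (ltnP p B) => [lt_pB|le_Bp] /=; last first.
  by rewrite big1 // => e _; rewrite (aact0l modM).
rewrite (big_nat_widen 1 _ _ _ _ le_BB') big_mkcond /=.
by apply: eq_big_nat => e _; case: (e < B)%N; rewrite ?(aact0l modM).
Qed.

Lemma spanned0 : spanned 0.
Proof.
exists 0, (fun _ _ => 0), 0%N.
by rewrite (aact0l modM) /phi_comb big_geq // addr0.
Qed.

Lemma spannedD u v : spanned u -> spanned v -> spanned (u + v).
Proof.
move=> [c [c' [B ->]]] [b [b' [C ->]]]; set B' := maxn B C.
rewrite (phi_comb_widen c' (leq_maxl B C)) (phi_comb_widen b' (leq_maxr B C)).
eexists (c + b), _, B'; rewrite (aactDl modM) addrACA -big_split /=; congr (_ + _).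
apply: eq_bigr => p _; rewrite -big_split /=; apply: eq_bigr => e _.
by rewrite -(aactDl modM).
Qed.

Lemma spannedZ r u : spanned u -> spanned (r *: u).
Proof.
move=> [c [c' [B ->]]]; exists (r *: c), (fun p e => r *: c' p e), B.
rewrite scalerDr (aactZl modM) /phi_comb scaler_sumr; congr (_ + _).
apply: eq_bigr => p _; rewrite scaler_sumr; apply: eq_bigr => e _.
by rewrite (aactZl modM).
Qed.

Lemma spanned_act a u : spanned u -> spanned (act a u).
Proof.
move=> [c [c' [B ->]]]; exists (regact mul a c), (fun p e => regact mul a (c' p e)), B.
rewrite (actDr modM) (act_aact modM) /phi_comb (act_sumr modM).
congr (_ + _); apply: eq_bigr => p _; rewrite (act_sumr modM).
by apply: eq_bigr => e _; rewrite (act_aact modM).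
Qed.

Lemma spanned_aact c u : spanned u -> spanned (aact act c u).
Proof. by move=> span_u; apply: spannedD; [apply: spanned_act | apply: spannedZ]. Qed.

Lemma spanned_sum I (r : seq I) (P : pred I) (F : I -> M) :
  (forall i, P i -> spanned (F i)) -> spanned (\sum_(i <- r | P i) F i).
Proof.
move=> span_F; elim/big_rec: _ => [|i w Pi span_w]; first exact: spanned0.
by apply: spannedD => //; apply: span_F.
Qed.

Lemma spanned_Psi k : (0 < k)%N -> spanned (Psi k).
Proof.
case: (ltngtP k 1) => [|k_gt1 _|-> _]; [by rewrite ltnS leqNgt => /negP | |].
- case: (phin_pexp_cases phi (d x) k_gt1) => [/= ->|[p [e [p_pr e_gt0 ->]]]].
    exact: spanned0.
  exists 0, (fun q f => if (q == p) && (f == e) then (0, 1) else 0), (maxn p e).+1.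
  rewrite (aact0l modM) add0r /phi_comb big_mkcond /=.
  rewrite (bigD1_seq p) ?mem_index_iota ?iota_uniq ?ltnS ?leq_maxl //= p_pr eqxx.
  rewrite (bigD1_seq e) ?mem_index_iota ?iota_uniq ?ltnS ?leq_maxr ?e_gt0 //= eqxx.
  rewrite (aact1 modM) [X in _ + X + _]big1 => [|f /negbTE ->]; last first.
    by rewrite (aact0l modM).
  rewrite addr0 big1 ?addr0 // => q /negbTE ->.
  by case: (prime q); rewrite // big1 // => f _; rewrite (aact0l modM).
- exists (0, 1), (fun _ _ => 0), 0%N.
  by rewrite /= phin1 (aact1 modM) /phi_comb big_geq // addr0.
Qed.

Lemma spanned_d a : spanned (d a).
Proof.
have [dD dZ _] : is_der mul act d by case: omega.
have d0 : d 0 = 0 by rewrite -(scale0r (0 : A)) dZ scale0r.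
have [n [c ->]] := basis.1 a; rewrite (big_morph d dD d0) big_seq.
apply: spanned_sum => k; rewrite mem_index_iota => /andP[k_gt0 _].
rewrite dZ; apply: spannedZ; rewrite d_gam // /gconv big_seq.
apply: spanned_sum => i; rewrite mem_index_iota => /andP[_ lt_ik].
by apply: spanned_aact; apply: spanned_Psi; rewrite subn_gt0.
Qed.

Lemma omega_spanned w : spanned w.
Proof.
pose S := PSubmod spanned0 spannedD spannedZ.
have modQ := qact_mod (S := S) modM spanned_act.
have zero_der : is_der mul (qact (S := S) act) (fun _ => 0).
  by split=> [a b|r a|a b]; rewrite ?addr0 ?scaler0 // !(act0r modQ) addr0.
case: omega => _ _ /(_ _ _ _ modQ zero_der) [_ /(_ (qproj S) (fun _ => 0)) proj0].
apply/(qproj_eq0 S)/proj0 => //.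
- split; [exact: qprojD | exact: qprojZ | move=> a m].
  by rewrite (qactE (S := S) modM spanned_act).
- by split=> [|r|a] *; rewrite ?addr0 ?scaler0 ?(act0r modQ).
- by move=> a; apply/(qproj_eq0 S)/spanned_d.
Qed.

Lemma exists_Aplus_lin_phin (N : lmodType R) (actN : A -> N -> N) (Phi : nat -> N) :
  is_Aplus_mod mul actN -> pexp_torsion Phi ->
  exists f : M -> N,
    is_Aplus_lin act actN f /\ forall k, (0 < k)%N -> f (Psi k) = Phi k.
Proof.
move=> modN torsPhi; pose s := basis_ext basis (gconv gam x actN Phi).
have der_s : is_der mul actN s.
  apply: (basis_ext_der basis dpA modN) => i j i_gt0 j_gt0.
  exact: (gconv_leibniz x dpA modN).
case: omega => _ _ /(_ N actN s modN der_s) [[f [linf fd]] _].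
exists f; split=> // k k_gt0; have [_ fZ _] := linf.
rewrite phin_d_gam // (Aplus_lin_sum linf) -(gconv_inversion x dpA modN Phi k_gt0).
apply: eq_big_nat => i /andP[_ lt_ik].
by rewrite fZ (Aplus_lin_aact linf) fd /s basis_ext_gam // subn_gt0.
Qed.

Lemma Aplus_lin_comb (N : lmodType R) (actN : A -> N -> N) (Phi : nat -> N) f :
  is_Aplus_lin act actN f -> (forall k, (0 < k)%N -> f (Psi k) = Phi k) ->
  forall c c' B, f (aact act c (d x) + phi_comb c' B) =
  aact actN c (Phi 1%N) +
  \sum_(0 <= p < B | prime p) \sum_(1 <= e < B) aact actN (c' p e) (Phi (p ^ e)%N).
Proof.
move=> linf fPsi c c' B; have [fD _ _] := linf.
rewrite fD (Aplus_lin_aact linf) -[d x](phin1 phi) fPsi //; congr (_ + _).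
rewrite /phi_comb (Aplus_lin_sum linf); apply: eq_bigr => p p_pr.
rewrite (Aplus_lin_sum linf); apply: eq_bigr => e _.
by rewrite (Aplus_lin_aact linf) fPsi // expn_gt0 prime_gt0.
Qed.

(* Map Omega to A_+ itself, sending dx to 1 and all phi_n(dx), n > 1, to 0. *)
Lemma dx_coef_eq0 c c' B : aact act c (d x) + phi_comb c' B = 0 -> c = 0.
Proof.
have algA : is_ncalg mul by case: dpA.
pose Phi n : A * R^o := if n == 1%N then (0, 1) else 0.
have torsPhi : pexp_torsion Phi by move=> n n_gt1; left; rewrite /Phi gtn_eqF.
have [f [linf fPsi]] := exists_Aplus_lin_phin (regact_mod algA) torsPhi.
move=> /(congr1 f); rewrite (Aplus_lin0 linf) (Aplus_lin_comb linf fPsi).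
rewrite /Phi eqxx aact_regact1 // big1 ?addr0 // => p p_pr.
rewrite big1_seq // => e /andP[_]; rewrite mem_index_iota => /andP[e_gt0 _].
by rewrite gtn_eqF ?pexp_gt1 ?(aact0r (regact_mod algA)).
Qed.

(* Map Omega to A_+ / p A_+, sending phi_{p^e}(dx) to 1 and dx and all other
   phi_n(dx) to 0. *)
Lemma phi_coef_pdvd c c' B p e : prime p -> (0 < e < B)%N -> (p < B)%N ->
  aact act c (d x) + phi_comb c' B = 0 -> exists b, c' p e = b *+ p.
Proof.
move=> p_pr e_range lt_pB; have e_gt0 : (0 < e)%N by case/andP: e_range.
have algA : is_ncalg mul by case: dpA.
pose S := pmul_submod (A * R^o)%type p.
have actS a u : S u -> S (regact mul a u) by apply/pmul_act/regact_mod.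
have modQ := qact_mod (regact_mod algA) actS.
pose Phi n := if n == (p ^ e)%N then qproj S (0, 1) else 0.
have torsPhi : pexp_torsion Phi.
  move=> n n_gt1; rewrite /Phi; case: eqP => [->|_]; last by left.
  by right; exists p, e; split=> //; rewrite -qprojMn; apply/(qproj_eq0 S); exists (0, 1).
have [f [linf fPsi]] := exists_Aplus_lin_phin modQ torsPhi.
move=> /(congr1 f); rewrite (Aplus_lin0 linf) (Aplus_lin_comb linf fPsi).
rewrite /Phi eq_sym (gtn_eqF (pexp_gt1 p_pr e_gt0)) (aact0r modQ) add0r.
under eq_bigr do under eq_bigr do rewrite (fun_if (aact _ _)) (aact0r modQ).
rewrite sum_pexp_pred1 // (qaactE (regact_mod algA) actS) aact_regact1 //.
by move/(qproj_eq0 S).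
Qed.

End OmegaCA.

Theorem mainTheorem8 (R : comPzRingType) (A : lmodType R)
  (mul : A -> A -> A) (gam : nat -> A -> A) (x : A)
  (M : lmodType R) (act : A -> M -> M) (d : A -> M) (phi : nat -> M -> M) :
  is_DPalg mul gam -> gam_basis gam x ->
  is_OmegaCA mul act d ->
  is_UA_mod act phi -> is_DPder mul gam act phi d ->
  (forall n, (0 < n)%N ->
     d (gam n x) = \sum_(0 <= i < n) aact act (gamP gam x i) (phin phi (n - i)%N (d x))
     /\ phin phi n (d x)
        = \sum_(0 <= i < n) ((-1) ^+ i) *: aact act (gamP gam x i) (d (gam (n - i)%N x)))
  /\ (forall (p e : nat) (b : Aplus A), prime p -> (0 < e)%N ->
        aact act (aplus_natmul b p) (phin phi (p ^ e)%N (d x)) = 0)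
  /\ (forall w : M, exists (c : Aplus A) (c' : nat -> nat -> Aplus A) (B : nat),
        w = aact act c (d x)
            + \sum_(0 <= p < B | prime p) \sum_(1 <= e < B)
                 aact act (c' p e) (phin phi (p ^ e)%N (d x)))
  /\ (forall (c : Aplus A) (c' : nat -> nat -> Aplus A) (B : nat),
        aact act c (d x)
          + \sum_(0 <= p < B | prime p) \sum_(1 <= e < B)
               aact act (c' p e) (phin phi (p ^ e)%N (d x)) = 0 ->
        c = (0, 0) /\
        forall p e : nat, prime p -> (0 < e)%N -> (p < B)%N -> (e < B)%N ->
          exists b : Aplus A, c' p e = aplus_natmul b p).
Proof.
move=> dpA basis omega UAphi dpd; have modM : is_Aplus_mod mul act by case: omega.
split; [|split; [|split]].
- move=> n n_gt0; split; first exact: (d_gam x omega dpd n_gt0).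
  exact: (phin_d_gam x dpA omega dpd n_gt0).
- move=> p e b p_pr e_gt0; exact: (aact_pmul_phin_pexp b (d x) modM UAphi p_pr e_gt0).
- exact: (omega_spanned basis omega dpd).
- move=> c c' B rel; split; first exact: (dx_coef_eq0 dpA basis omega dpd rel).
  move=> p e p_pr e_gt0 lt_pB lt_eB; have e_range : (0 < e < B)%N by rewrite e_gt0.
  have [b ->] := phi_coef_pdvd dpA basis omega dpd p_pr e_range lt_pB rel.
  by exists b; rewrite aplus_natmulE.
Qed.
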